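(* Let $(\gamma,d)$ be a metric space homeomorphic to $[0,1]$, equipped with a total order $\le$ induced by a homeomorphism from $[0,1]$. Let $(x_i,z_i,y_i)_{i\in\mathbb{N}}$ be triples of points of $\gamma$ with $x_i\le z_i\le y_i$ and $x_i\ne y_i$ for each $i$. If $$\lim_{i\to\infty}\frac{d(x_i,y_i)}{\max\{d(x_i,z_i),d(z_i,y_i)\}}=0,$$ then $\lim_{i\to\infty}\max\{d(x_i,z_i),d(z_i,y_i)\}=0$. *)

From Stdlib Require Import Reals.
Open Scope R_scope.

Definition is_metric {T : Type} (d : T -> T -> R) : Prop :=
  (forall x y, 0 <= d x y) /\
  (forall x y, d x y = 0 <-> x = y) /\
  (forall x y, d x y = d y x) /\
  (forall x y z, d x z <= d x y + d y z).

Definition in01 (s : R) : Prop := 0 <= s <= 1.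

Definition homeo01 {T : Type} (d : T -> T -> R) (h : R -> T) : Prop :=
  (forall s t, in01 s -> in01 t -> h s = h t -> s = t) /\
  (forall p : T, exists s, in01 s /\ h s = p) /\
  (forall s, in01 s -> forall eps, 0 < eps -> exists delta, 0 < delta /\
     forall t, in01 t -> Rabs (t - s) < delta -> d (h s) (h t) < eps) /\
  (forall s, in01 s -> forall eps, 0 < eps -> exists delta, 0 < delta /\
     forall t, in01 t -> d (h s) (h t) < delta -> Rabs (t - s) < eps).

Definition ord_le {T : Type} (h : R -> T) (x y : T) : Prop :=
  exists s t, in01 s /\ in01 t /\ s <= t /\ h s = x /\ h t = y.

From Stdlib Require Import Reals Lra ClassicalEpsilon Rtopology.
Open Scope R_scope.

(* Two compactness arguments on [0,1]: d is bounded on the arc, and, uniformly,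
   a short chord d(h s, h t) forces every point h u with s <= u <= t to be close
   to h s (otherwise a cluster point l of the s would contradict the continuity
   of h and h^-1 at l).  With M_i := max(d(x_i,z_i), d(z_i,y_i)) > 0 bounded and
   d(x_i,y_i)/M_i tending to 0, the chords d(x_i,y_i) tend to 0, hence so does M_i. *)

Lemma in01_seq_cluster (s : nat -> R) (Hs : forall n, in01 (s n)) :
  exists l, in01 l /\
    forall del c, 0 < del -> exists p, c < INR p /\ Rabs (s p - l) < del.
Proof.
  destruct (Bolzano_Weierstrass s in01 (compact_P3 0 1) Hs) as [l Hl].
  assert (near : forall del c, 0 < del -> exists p, c < INR p /\ Rabs (s p - l) < del).
  { intros del c Hdel.
    destruct (INR_unbounded c) as [N HN].
    destruct (Hl (disc l (mkposreal del Hdel)) N) as [p [HNp Hp]].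
    - exists (mkposreal del Hdel); easy.
    - exists p; split; [apply le_INR in HNp; lra | exact Hp]. }
  exists l; split; [|exact near].
  split; apply Rnot_lt_le; intro Hout.
  - destruct (near (- l) 0 ltac:(lra)) as [p [_ Hp]].
    specialize (Hs p); apply Rabs_def2 in Hp; unfold in01 in Hs; lra.
  - destruct (near (l - 1) 0 ltac:(lra)) as [p [_ Hp]].
    specialize (Hs p); apply Rabs_def2 in Hp; unfold in01 in Hs; lra.
Qed.

Lemma Rinv_INR_succ_lt (e : R) (n : nat) : 0 < e -> / e < INR n -> / (INR n + 1) < e.
Proof.
  intros He Hn.
  rewrite <- (Rinv_inv e).
  apply Rinv_lt_contravar; [|lra].
  pose proof (Rinv_0_lt_compat e He); pose proof (pos_INR n).
  apply Rmult_lt_0_compat; lra.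
Qed.

Lemma lt_of_ratio_lt (a M B e : R) :
  0 < M -> M <= B -> 0 < e -> a / M < e / B -> a < e.
Proof.
  intros HM HMB He Ha.
  assert (HB : 0 < B) by lra.
  replace a with (a / M * M) by (field; lra).
  apply Rlt_le_trans with (e / B * M); [apply Rmult_lt_compat_r; lra|].
  replace e with (e / B * B) at 2 by (field; lra).
  apply Rmult_le_compat_l; [apply Rlt_le, Rdiv_lt_0_compat|]; lra.
Qed.

Section Arc.

Variables (T : Type) (d : T -> T -> R) (h : R -> T).
Hypothesis Hd : is_metric d.
Hypothesis Hh : homeo01 d h.

Lemma dist_ge0 a b : 0 <= d a b.
Proof. apply Hd. Qed.

Lemma dist_sym a b : d a b = d b a.
Proof. apply Hd. Qed.

Lemma dist_triangle a b c : d a c <= d a b + d b c.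
Proof. apply Hd. Qed.

Lemma Rmax_dist_pos a b c : a <> c -> 0 < Rmax (d a b) (d b c).
Proof.
  intro Hac.
  pose proof (Rmax_l (d a b) (d b c)); pose proof (Rmax_r (d a b) (d b c)).
  pose proof (dist_ge0 a b); pose proof (dist_ge0 b c).
  assert (Hmax : 0 <= Rmax (d a b) (d b c)) by lra.
  destruct (Rle_lt_or_eq_dec _ _ Hmax) as [Hpos | Hmax0]; [exact Hpos|].
  exfalso; apply Hac.
  assert (Eab : a = b) by (apply Hd; lra).
  assert (Ebc : b = c) by (apply Hd; lra).
  congruence.
Qed.

Lemma h_cont s : in01 s -> forall eps, 0 < eps -> exists delta, 0 < delta /\
  forall t, in01 t -> Rabs (t - s) < delta -> d (h s) (h t) < eps.
Proof. apply Hh. Qed.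

Lemma h_inv_cont s : in01 s -> forall eps, 0 < eps -> exists delta, 0 < delta /\
  forall t, in01 t -> d (h s) (h t) < delta -> Rabs (t - s) < eps.
Proof. apply Hh. Qed.

Lemma ord_le_chain a b c : ord_le h a b -> ord_le h b c ->
  exists s u t, in01 s /\ in01 u /\ in01 t /\ s <= u /\ u <= t /\
    h s = a /\ h u = b /\ h t = c.
Proof.
  intros [s [u [Hs [Hu [Hsu [Es Eu]]]]]] [u' [t [Hu' [Ht [Hut [Eu' Et]]]]]].
  assert (u' = u) by (apply Hh; auto; congruence); subst u'.
  exists s, u, t; tauto.
Qed.

Lemma homeo01_bounded : exists B, 0 < B /\
  forall s t, in01 s -> in01 t -> d (h s) (h t) <= B.
Proof.
  assert (H0 : in01 0) by (unfold in01; lra).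
  assert (HB : exists B, forall s, in01 s -> d (h 0) (h s) <= B).
  { apply NNPP; intro Hunb.
    assert (far : forall n, exists s, in01 s /\ INR n < d (h 0) (h s)).
    { intro n; apply NNPP; intro Hn; apply Hunb; exists (INR n).
      intros s Hs; apply Rnot_lt_le; intro; apply Hn; exists s; auto. }
    destruct (choice _ far) as [f Hf].
    destruct (in01_seq_cluster f (fun n => proj1 (Hf n))) as [l [Hl Hcl]].
    destruct (h_cont l Hl 1 ltac:(lra)) as [del [Hdel Hc]].
    destruct (Hcl del (d (h 0) (h l) + 1) Hdel) as [p [Hp Hfp]].
    pose proof (Hc (f p) (proj1 (Hf p)) Hfp).
    pose proof (proj2 (Hf p)); pose proof (dist_triangle (h 0) (h l) (h (f p))).
    lra. }
  destruct HB as [B HB].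
  exists (2 * B + 1); split.
  - pose proof (HB 0 H0); pose proof (dist_ge0 (h 0) (h 0)); lra.
  - intros s t Hs Ht.
    pose proof (dist_triangle (h s) (h 0) (h t)); rewrite (dist_sym (h s) (h 0)) in *.
    pose proof (HB s Hs); pose proof (HB t Ht); lra.
Qed.

Lemma homeo01_arc_start eps : 0 < eps -> exists delta, 0 < delta /\
  forall s u t, in01 s -> in01 u -> in01 t -> s <= u -> u <= t ->
    d (h s) (h t) < delta -> d (h s) (h u) < eps.
Proof.
  intro Heps; apply NNPP; intro Hno.
  assert (bad : forall n : nat, exists p : R * R * R, let '(s, u, t) := p in
    in01 s /\ in01 u /\ in01 t /\ s <= u /\ u <= t /\
    d (h s) (h t) < / (INR n + 1) /\ eps <= d (h s) (h u)).
  { intro n; apply NNPP; intro Hn; apply Hno; exists (/ (INR n + 1)); split.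
    { apply Rinv_0_lt_compat; pose proof (pos_INR n); lra. }
    intros s u t Hs Hu Ht Hsu Hut Hst; apply Rnot_le_lt; intro; apply Hn.
    exists (s, u, t); tauto. }
  destruct (choice _ bad) as [f Hf].
  assert (Hs01 : forall n, in01 (fst (fst (f n)))).
  { intro n; specialize (Hf n); destruct (f n) as [[s u] t]; simpl; tauto. }
  destruct (in01_seq_cluster _ Hs01) as [l [Hl Hcl]].
  destruct (h_cont l Hl (eps / 2) ltac:(lra)) as [d1 [Hd1 Hc1]].
  destruct (h_inv_cont l Hl d1 Hd1) as [d2 [Hd2 Hc2]].
  destruct (h_cont l Hl (d2 / 2) ltac:(lra)) as [d3 [Hd3 Hc3]].
  destruct (Hcl (Rmin d1 d3) (/ (d2 / 2)) ltac:(apply Rmin_pos; lra)) as [p [Hp Hsp]].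
  specialize (Hf p); destruct (f p) as [[s u] t]; simpl in Hsp.
  destruct Hf as [Hs [Hu [Ht [Hsu [Hut [Hst Hsu_far]]]]]].
  pose proof (Rinv_INR_succ_lt (d2 / 2) p ltac:(lra) Hp).
  pose proof (Rmin_l d1 d3); pose proof (Rmin_r d1 d3).
  (* continuity of h^-1 pulls t, and with it u, close to l *)
  assert (Hls : d (h l) (h s) < d2 / 2) by (apply Hc3; auto; lra).
  assert (Hlt : Rabs (t - l) < d1).
  { apply Hc2; auto; pose proof (dist_triangle (h l) (h s) (h t)); lra. }
  assert (Hul : Rabs (u - l) < d1).
  { apply Rabs_def2 in Hlt; apply Rabs_def2 in Hsp; apply Rabs_def1; lra. }
  pose proof (Hc1 u Hu Hul); pose proof (Hc1 s Hs ltac:(lra)).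
  pose proof (dist_triangle (h s) (h l) (h u)); rewrite (dist_sym (h s) (h l)) in *.
  lra.
Qed.

Lemma homeo01_arc_small eps : 0 < eps -> exists delta, 0 < delta /\
  forall s u t, in01 s -> in01 u -> in01 t -> s <= u -> u <= t ->
    d (h s) (h t) < delta -> Rmax (d (h s) (h u)) (d (h u) (h t)) < eps.
Proof.
  intro Heps.
  destruct (homeo01_arc_start (eps / 2) ltac:(lra)) as [delta [Hdelta Harc]].
  exists (Rmin delta (eps / 2)); split; [apply Rmin_pos; lra|].
  intros s u t Hs Hu Ht Hsu Hut Hst.
  pose proof (Rmin_l delta (eps / 2)); pose proof (Rmin_r delta (eps / 2)).
  pose proof (Harc s u t Hs Hu Ht Hsu Hut ltac:(lra)).
  pose proof (dist_triangle (h u) (h s) (h t)); rewrite (dist_sym (h u) (h s)) in *.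
  apply Rmax_lub_lt; lra.
Qed.

End Arc.

Theorem lemma4p1 (T : Type) (d : T -> T -> R) (h : R -> T)
  (Hd : is_metric d) (Hh : homeo01 d h)
  (x z y : nat -> T)
  (Hxz : forall i, ord_le h (x i) (z i))
  (Hzy : forall i, ord_le h (z i) (y i))
  (Hxy : forall i, x i <> y i)
  (Hlim : Un_cv (fun i => d (x i) (y i) / Rmax (d (x i) (z i)) (d (z i) (y i))) 0) :
  Un_cv (fun i => Rmax (d (x i) (z i)) (d (z i) (y i))) 0.
Proof.
  intros eps Heps.
  destruct (homeo01_arc_small T d h Hd Hh eps Heps) as [delta [Hdelta Harc]].
  destruct (homeo01_bounded T d h Hd Hh) as [B [HB0 HB]].
  destruct (Hlim (delta / B) ltac:(apply Rdiv_lt_0_compat; lra)) as [N HN].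
  exists N; intros n Hn; specialize (HN n Hn); unfold R_dist in *.
  rewrite Rminus_0_r in *.
  destruct (ord_le_chain T d h Hh _ _ _ (Hxz n) (Hzy n))
    as [s [u [t [Hs [Hu [Ht [Hsu [Hut [Ex [Ez Ey]]]]]]]]]].
  pose proof (Hxy n) as Hne.
  rewrite <- Ex, <- Ey in Hne; rewrite <- Ex, <- Ez, <- Ey in HN |- *.
  pose proof (Rmax_dist_pos T d Hd (h s) (h u) (h t) Hne) as HM.
  assert (HMB : Rmax (d (h s) (h u)) (d (h u) (h t)) <= B)
    by (apply Rmax_lub; apply HB; assumption).
  assert (Hst : d (h s) (h t) < delta).
  { apply (lt_of_ratio_lt _ _ _ _ HM HMB Hdelta).
    apply Rabs_def2 in HN; lra. }
  rewrite Rabs_right by lra.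
  exact (Harc s u t Hs Hu Ht Hsu Hut Hst).
Qed.
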